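(* Let $m=p_1^{a_1}\cdots p_k^{a_k}$ be a positive integer. Then $$\mathbb{E}(\mathbb{X}(m))=\begin{cases}\prod_{j=1}^k(1-\delta_{p_j})=\prod_{\substack{p\equiv1\bmod3\\ p\mid m}}\frac{p}{p+2}&\text{if } m \text{ is a cube},\\ 0&\text{otherwise}.\end{cases}$$ Furthermore, $\sum_{m=1}^\infty\mathbb{E}\left(\frac{\mathbb{X}(m)}{m}\right)\le\zeta(3)$ and $\sum_{m=1}^\infty\mathrm{Var}\left(\frac{\mathbb{X}(m)}{m}\right)\le\zeta(6)$.
   Context: The $\mathbb{X}(p)$, $p$ prime, are independent random variables, with $\mathbb{X}(p)=0$ with probability $\delta_p$ and $\mathbb{X}(p)$ equal to each of $1,\omega_3,\omega_3^2$ ($\omega_3=e^{2\pi i/3}$) with probability $\frac{1-\delta_p}{3}$, where $\delta_p=0$ if $p\equiv2\pmod3$ or $p=3$, and $\delta_p=\frac{2}{p+2}$ if $p\equiv1\pmod3$. $\mathbb{X}$ is extended completely multiplicatively: $\mathbb{X}(p_1^{a_1}\cdots p_k^{a_k})=\mathbb{X}(p_1)^{a_1}\cdots\mathbb{X}(p_k)^{a_k}$. *)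

From HB Require Import structures.
From mathcomp Require Import all_boot all_order all_algebra.
From mathcomp Require Import all_classical all_reals.
From mathcomp Require Import ereal topology normedtype sequences measure probability.
From mathcomp Require Import complex.
Set Implicit Arguments. Unset Strict Implicit. Unset Printing Implicit Defensive.
Import Order.TTheory GRing.Theory Num.Theory numFieldNormedType.Exports.
Local Open Scope ring_scope.
Local Open Scope complex_scope.
Local Open Scope classical_set_scope.

Section Defs.
Variable R : realType.
Local Notation C := R[i].

Definition omega3 : C := (- (1 / 2)) +i* (Num.sqrt 3 / 2).

Definition Xvals : seq C := [:: 0; 1; omega3; omega3 ^+ 2].

Definition delta (p : nat) : R :=
  if (p %% 3 == 1)%N then 2 / ((p%:R : R) + 2) else 0.

Definition zeta (s : nat) : R := limn (fun N => \sum_(1 <= n < N) (n%:R ^- s : R)).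

Definition Xmul (T : Type) (X : nat -> T -> C) (m : nat) (t : T) : C :=
  \prod_(p <- primes m) X p t ^+ logn p m.

Variables (d : measure_display) (T : measurableType d) (P : probability T R).

Definition probeq (Z : T -> C) (v : C) : C := (fine (P [set t | Z t = v]))%:C.

(* expectation of a discrete random variable Z taking its values in the
   finite list vs:  E(Z) = sum_v v P(Z = v) *)
Definition cexpect (vs : seq C) (Z : T -> C) : C :=
  \sum_(v <- undup vs) v * probeq Z v.

Definition cvar (vs : seq C) (Z : T -> C) : C :=
  \sum_(v <- undup vs) `|v - cexpect vs Z| ^+ 2 * probeq Z v.

Definition Xmvals (m : nat) : seq C := [seq v / m%:R | v <- Xvals].

End Defs.

From HB Require Import structures.
From mathcomp Require Import all_boot all_order all_algebra.
From mathcomp Require Import all_classical all_reals.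
From mathcomp Require Import ereal topology normedtype sequences measure probability.
From mathcomp Require Import complex.
From mathcomp Require Import ring lra.
Import Order.TTheory GRing.Theory Num.Theory numFieldNormedType.Exports.
Set Implicit Arguments. Unset Strict Implicit. Unset Printing Implicit Defensive.
Local Open Scope ring_scope.
Local Open Scope complex_scope.
Local Open Scope classical_set_scope.

(** The [X p] are independent, so for [m = \prod p ^ a_p] the expectation of
    [X m = \prod X p ^ a_p] factors into the moments [E (X p ^ a_p)].  For
    [a > 0] such a moment is [(1 - delta p) (1 + w ^ a + w ^ (2 a)) / 3], which
    is [1 - delta p] when [3 %| a] and [0] otherwise: [E (X m)] vanishes unless
    [m] is a cube, and lies in [[0, 1]].  Hence the first series is dominated by
    [\sum_n n ^- 3].  For the second one, [X 1 = 1] has variance [0] while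
    [Var (X m) <= E |X m| ^ 2 <= 1] for every [m], so the series is at most
    [\sum_(k >= 2) k ^- 2 <= 1 <= zeta 6]. *)

Definition perfect_cube (m : nat) : bool :=
  all (fun p => 3 %| logn p m)%N (primes m).

Lemma perfect_cubeP m : reflect (exists n, m = n ^ 3)%N (perfect_cube m).
Proof.
case: m => [|m]; first by left; exists 0%N.
apply: (iffP allP) => [cube_exps|[n ->] p _]; last by rewrite lognX dvdn_mulr.
exists (\prod_(p <- primes m.+1) p ^ (logn p m.+1 %/ 3))%N.
rewrite {1}(prod_prime_decomp (ltn0Sn m)) prime_decompE big_map /=.
rewrite (big_morph (fun n => n ^ 3)%N (fun _ _ => expnMn _ _ _) (exp1n 3)).
by apply: eq_big_seq => p /cube_exps p_exp; rewrite -expnM divnK.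
Qed.

Lemma big_pred1_seq (R : Type) (idx : R) (op : Monoid.law idx) (I : eqType)
    (r : seq I) (i : I) (F : I -> R) :
  uniq r -> i \in r -> \big[op/idx]_(j <- r | j == i) F j = F i.
Proof. by move=> r_uniq ri; rewrite -big_filter filter_pred1_uniq // big_seq1. Qed.

Section CubeRootOfUnity.
Variable R : realType.
Local Notation w := (omega3 R).

Lemma omega3_sqr : w ^+ 2 = (- (1 / 2)) +i* (- (Num.sqrt 3 / 2)).
Proof.
have sqrt3 : Num.sqrt 3 * Num.sqrt 3 = 3 :> R by rewrite -expr2 sqr_sqrtr.
by rewrite /omega3 expr2; simpc; apply/eqP; rewrite eq_complex /=; apply/andP;
  split; apply/eqP; nra.
Qed.

Lemma omega3_cube : w ^+ 3 = 1.
Proof.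
have sqrt3 : Num.sqrt 3 * Num.sqrt 3 = 3 :> R by rewrite -expr2 sqr_sqrtr.
by rewrite exprS omega3_sqr /omega3; simpc; apply/eqP; rewrite eq_complex /=;
  apply/andP; split; apply/eqP; nra.
Qed.

Lemma omega3_expr_mod3 a : w ^+ a = w ^+ (a %% 3).
Proof. by rewrite {1}(divn_eq a 3) exprD mulnC exprM omega3_cube expr1n mul1r. Qed.

Lemma omega3_power_sum a : 1 + w ^+ a + (w ^+ 2) ^+ a = if (3 %| a)%N then 3 else 0.
Proof.
have w_sum : 1 + w + w ^+ 2 = 0.
  by apply/eqP; rewrite omega3_sqr /omega3 eq_complex /=; apply/andP; split;
    apply/eqP; lra.
rewrite exprAC omega3_expr_mod3 /dvdn.
have : (a %% 3 < 3)%N by rewrite ltn_mod.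
case: (a %% 3)%N => [|[|[|//]]] _ /=; first by rewrite expr0 expr1n -addrA.
  by rewrite expr1.
by rewrite -exprM [w ^+ (2 * 2)]omega3_expr_mod3 addrAC.
Qed.

Lemma norm_omega3 : `|w| = 1.
Proof.
have norm_cube : `|w| ^+ 3 = 1 by rewrite -normrX omega3_cube normr1.
by apply/eqP; rewrite -(@pexpr_eq1 _ _ 3) ?normr_ge0 // norm_cube.
Qed.

Lemma uniq_Xvals : uniq (Xvals R).
Proof.
have sqrt3_gt0 : 0 < Num.sqrt 3 :> R by rewrite sqrtr_gt0.
rewrite /Xvals /= !inE omega3_sqr /omega3 !negb_or !eq_complex /= !negb_and.
by repeat (apply/andP; split) => //; apply/orP; [left|left|left|left|left|right];
  apply/eqP; lra.
Qed.

Lemma Xvals1 : 1 \in Xvals R.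
Proof. by rewrite !inE eqxx orbT. Qed.

Lemma XvalsM x y : x \in Xvals R -> y \in Xvals R -> x * y \in Xvals R.
Proof.
rewrite /Xvals !inE => /or4P[] /eqP -> /or4P[] /eqP ->;
  rewrite ?mul0r ?mulr0 ?mul1r ?mulr1 ?eqxx ?orbT //.
- by rewrite -exprS omega3_cube eqxx orbT.
- by rewrite -exprSr omega3_cube eqxx orbT.
- by rewrite -exprD omega3_expr_mod3 /= eqxx !orbT.
Qed.

Lemma XvalsX x n : x \in Xvals R -> x ^+ n \in Xvals R.
Proof. by move=> xv; elim: n => [|n IHn]; rewrite ?Xvals1 // exprS XvalsM. Qed.

Lemma norm_Xvals_le1 x : x \in Xvals R -> `|x| <= 1.
Proof.
rewrite !inE => /or4P[] /eqP ->; rewrite ?normr0 ?ler01 ?normr1 //.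
  by rewrite norm_omega3.
by rewrite normrX norm_omega3 expr1n.
Qed.

End CubeRootOfUnity.

Lemma one_sub_delta (R : realType) p :
  1 - delta R p = if (p %% 3 == 1)%N then p%:R / (p%:R + 2) else 1.
Proof.
rewrite /delta; case: ifP => _; last by rewrite subr0.
have p2_neq0 : p%:R + 2 != 0 :> R by rewrite -natrD pnatr_eq0 addn2.
by field.
Qed.

Lemma one_sub_delta_ge0_le1 (R : realType) p : 0 <= 1 - delta R p <= 1.
Proof.
rewrite one_sub_delta; case: ifP => _; last by rewrite ler01 lexx.
have p2_gt0 : 0 < p%:R + 2 :> R by rewrite -natrD ltr0n addn2.
by rewrite divr_ge0 ?ler0n ?(ltW p2_gt0) // ler_pdivrMr // mul1r lerDl ler0n.
Qed.

Section DiscreteVariables.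
Variables (R : realType) (d : measure_display) (T : measurableType d).
Variable P : probability T R.
Local Notation C := R[i].

Definition cprob (A : set T) : C := (fine (P A))%:C.

Lemma cprob0 : cprob set0 = 0.
Proof. by rewrite /cprob measure0. Qed.

Lemma cprobT : cprob setT = 1.
Proof. by rewrite /cprob probability_setT. Qed.

Definition discrete_rv (Z : T -> C) : Prop :=
  (forall t, Z t \in Xvals R) /\ (forall y, measurable [set t | Z t = y]).

Lemma measurable_preimage_seq (Z : T -> C) (s : seq C) :
  (forall y, measurable [set t | Z t = y]) -> measurable [set t | Z t \in s].
Proof.
move=> Zmeas; rewrite (_ : [set t | _] = \bigcup_(y in [set` s]) [set t | Z t = y]).
  by rewrite bigcup_seq; apply: bigsetU_measurable.
by apply/seteqP; split => t /= => [Zs|[y /= ys ->]] //; exists (Z t).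
Qed.

Lemma discrete_rv_const c : c \in Xvals R -> discrete_rv (fun _ => c).
Proof.
move=> cX; split => [//|y]; have [<-|neq] := eqVneq c y.
  by rewrite (_ : [set _ | c = c] = setT) //; apply/seteqP.
rewrite (_ : [set _ | c = y] = set0) //.
by apply/seteqP; split => t // /eqP; rewrite (negPf neq).
Qed.

Lemma discrete_rv_comp (f : C -> C) (Z : T -> C) :
  {in Xvals R, forall x, f x \in Xvals R} -> discrete_rv Z ->
  discrete_rv (fun t => f (Z t)).
Proof.
move=> fX [ZX Zmeas]; split => [t|y]; first exact: fX.
rewrite (_ : [set t | _] = [set t | Z t \in [seq x <- Xvals R | f x == y]]).
  exact: measurable_preimage_seq.
by apply/seteqP; split => t; rewrite /mkset mem_filter ZX andbT => /eqP.
Qed.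

Lemma discrete_rvM (Z K : T -> C) :
  discrete_rv Z -> discrete_rv K -> discrete_rv (fun t => Z t * K t).
Proof.
move=> [ZX Zmeas] Kdisc; split => [t|y]; first by rewrite XvalsM ?Kdisc.1.
rewrite (_ : [set t | _] = \bigcup_(x in [set` Xvals R])
                             ([set t | Z t = x] `&` [set t | x * K t = y])).
  rewrite bigcup_seq big_seq; apply: bigsetU_measurable => x xX.
  apply: measurableI => //; apply: (discrete_rv_comp _ Kdisc).2 => z.
  exact: XvalsM.
apply/seteqP; split => t /= => [<-|[x _ [-> //]]].
by exists (Z t); [exact: ZX|].
Qed.

Lemma measure_preimage_seq (Z : T -> C) (s : seq C) (E : set T) : uniq s ->
  (forall y, measurable [set t | Z t = y]) -> measurable E ->
  P ([set t | Z t \in s] `&` E) = (\sum_(x <- s) P ([set t | Z t = x] `&` E))%E.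
Proof.
move=> + Zmeas mE; elim: s => [|x s IHs] /=.
  by rewrite big_nil (_ : _ `&` _ = set0) ?measure0 //; apply/seteqP; split => t [].
move=> /andP[xs s_uniq]; rewrite big_cons -IHs //.
rewrite (_ : _ `&` _ = ([set t | Z t = x] `&` E) `|` ([set t | Z t \in s] `&` E)).
  rewrite measureU //; try by apply: measurableI => //; apply: measurable_preimage_seq.
  by apply/seteqP; split => // t [[Zx _] [/= + _]]; rewrite Zx (negPf xs).
apply/seteqP; split => t /=; rewrite inE.
  by move=> [/orP[/eqP ->|Zs] Et]; [left|right].
by case=> -[-> Et]; rewrite ?eqxx ?orbT.
Qed.

Lemma cprob_partition (Z : T -> C) (E : set T) : discrete_rv Z -> measurable E ->
  cprob E = \sum_(x <- Xvals R) cprob ([set t | Z t = x] `&` E).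
Proof.
move=> [ZX Zmeas] mE; rewrite -rmorph_sum sum_fine; last first.
  by move=> x _; apply: fin_num_measure; apply: measurableI.
rewrite -measure_preimage_seq ?uniq_Xvals // (_ : [set t | _] = setT) ?setTI //.
by apply/seteqP; split => t // _; apply: ZX.
Qed.

Definition cexpect_on (Z : T -> C) (B : set T) : C :=
  \sum_(y <- Xvals R) y * cprob ([set t | Z t = y] `&` B).

Lemma cexpect_on_setT (Z : T -> C) : cexpect P (Xvals R) Z = cexpect_on Z setT.
Proof.
rewrite /cexpect undup_id ?uniq_Xvals //; apply: eq_bigr => y _.
by rewrite setIT.
Qed.

Lemma eq_cexpect_on (W W' : T -> C) (B : set T) :
  (forall t, B t -> W t = W' t) -> cexpect_on W B = cexpect_on W' B.
Proof.
move=> eqWW'; apply: eq_bigr => y _; congr (_ * cprob _).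
by apply/seteqP; split => t /= [<- Bt]; split; rewrite ?eqWW'.
Qed.

Lemma cexpect_on_comp (f : C -> C) (K : T -> C) (B : set T) :
  {in Xvals R, forall x, f x \in Xvals R} -> discrete_rv K -> measurable B ->
  cexpect_on (fun t => f (K t)) B =
  \sum_(z <- Xvals R) f z * cprob ([set t | K t = z] `&` B).
Proof.
move=> fX Kdisc mB; have [_ fKmeas] := discrete_rv_comp fX Kdisc.
transitivity (\sum_(y <- Xvals R) \sum_(z <- Xvals R)
    (if y == f z then y * cprob ([set t | K t = z] `&` B) else 0)).
  apply: eq_bigr => y _; rewrite (cprob_partition Kdisc); last exact: measurableI.
  rewrite mulr_sumr; apply: eq_bigr => z _; case: eqP => [->|neq].
    congr (_ * cprob _); apply/seteqP; split => t /= [Kt]; first by case.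
    by rewrite Kt.
  rewrite (_ : _ `&` _ = set0) ?cprob0 ?mulr0 //.
  by apply/seteqP; split => t // [Kt [fKt _]]; apply: neq; rewrite -fKt Kt.
rewrite exchange_big; apply: eq_big_seq => z zX.
by rewrite -big_mkcond big_pred1_seq ?uniq_Xvals ?fX.
Qed.

Lemma cexpect_on_const (c : C) (B : set T) : c \in Xvals R -> measurable B ->
  cexpect_on (fun _ => c) B = c * cprob B.
Proof.
move=> cX mB; have onedisc := discrete_rv_const (Xvals1 R).
rewrite (cexpect_on_comp (f := fun _ => c) (K := fun _ => 1)) // -mulr_sumr.
by rewrite -(cprob_partition onedisc).
Qed.

Lemma cexpect_on_partition (Z W : T -> C) (B : set T) :
  discrete_rv Z -> discrete_rv W -> measurable B ->
  cexpect_on W B = \sum_(x <- Xvals R) cexpect_on W ([set t | Z t = x] `&` B).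
Proof.
move=> Zdisc [_ Wmeas] mB; rewrite /cexpect_on exchange_big.
apply: eq_bigr => y _; rewrite -mulr_sumr (cprob_partition Zdisc).
  by congr (_ * _); apply: eq_bigr => x _; rewrite setICA.
exact: measurableI.
Qed.

Lemma cexpect_on_mul (g : C -> C) (Z K : T -> C) (B : set T) :
  {in Xvals R, forall x, g x \in Xvals R} -> discrete_rv Z -> discrete_rv K ->
  measurable B ->
  cexpect_on (fun t => g (Z t) * K t) B =
  \sum_(x <- Xvals R) g x * cexpect_on K ([set t | Z t = x] `&` B).
Proof.
move=> gX Zdisc Kdisc mB.
have gZKdisc := discrete_rvM (discrete_rv_comp gX Zdisc) Kdisc.
rewrite (cexpect_on_partition Zdisc gZKdisc mB); apply: eq_big_seq => x xX.
have mZB : measurable ([set t | Z t = x] `&` B).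
  by apply: measurableI => //; case: Zdisc.
rewrite (eq_cexpect_on (W' := fun t => g x * K t)); last by move=> t [-> _].
rewrite (cexpect_on_comp (f := fun z => g x * z)) // => [|z zX].
  by rewrite /cexpect_on mulr_sumr; apply: eq_bigr => z _; rewrite mulrA.
by rewrite XvalsM ?gX.
Qed.

Lemma probeq_ge0 (Z : T -> C) v : 0 <= probeq P Z v.
Proof. by rewrite /probeq ler0c fine_ge0 ?measure_ge0. Qed.

Lemma sum_probeq (Z : T -> C) : discrete_rv Z -> \sum_(v <- Xvals R) probeq P Z v = 1.
Proof.
move=> Zdisc; rewrite -cprobT (cprob_partition Zdisc measurableT).
by apply: eq_bigr => v _; rewrite setIT.
Qed.

Lemma cvar_second_moment (Z : T -> C) : discrete_rv Z ->
  cvar P (Xvals R) Z =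
  \sum_(v <- Xvals R) `|v| ^+ 2 * probeq P Z v - `|cexpect P (Xvals R) Z| ^+ 2.
Proof.
move=> Zdisc; have sum1 := sum_probeq Zdisc.
rewrite /cvar undup_id ?uniq_Xvals //; set e := cexpect P (Xvals R) Z.
have eE : e = \sum_(v <- Xvals R) v * probeq P Z v.
  by rewrite /e /cexpect undup_id ?uniq_Xvals.
have eJ : e^*%C = \sum_(v <- Xvals R) v^*%C * probeq P Z v.
  rewrite eE rmorph_sum; apply: eq_bigr => v _; rewrite rmorphM.
  by congr (_ * _); apply: conjc_real.
transitivity (\sum_(v <- Xvals R) `|v| ^+ 2 * probeq P Z v
    - (\sum_(v <- Xvals R) v * probeq P Z v) * e^*%C
    - e * \sum_(v <- Xvals R) v^*%C * probeq P Z v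
    + e * e^*%C * \sum_(v <- Xvals R) probeq P Z v).
  rewrite mulr_suml !mulr_sumr -!sumrB -big_split /=; apply: eq_bigr => v _.
  by rewrite !sqr_normc rmorphB /=; ring.
by rewrite -eE -eJ sum1 sqr_normc; ring.
Qed.

Lemma cvar_le1 (Z : T -> C) : discrete_rv Z -> cvar P (Xvals R) Z <= 1.
Proof.
move=> Zdisc; rewrite cvar_second_moment // -(sum_probeq Zdisc).
apply: le_trans (_ : _ <= \sum_(v <- Xvals R) `|v| ^+ 2 * probeq P Z v) _.
  by rewrite gerBl exprn_ge0.
rewrite big_seq_cond [leRHS]big_seq_cond; apply: ler_sum => v /andP[vX _].
by rewrite ler_piMl ?probeq_ge0 // exprn_ile1 ?norm_Xvals_le1.
Qed.

Lemma cvar_const (c : C) : c \in Xvals R -> cvar P (Xvals R) (fun _ => c) = 0.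
Proof.
move=> cX; have Ec : cexpect P (Xvals R) (fun _ => c) = c.
  by rewrite cexpect_on_setT cexpect_on_const // cprobT mulr1.
rewrite /cvar undup_id ?uniq_Xvals // Ec big1 // => v _.
have [<-|neq] := eqVneq c v; first by rewrite subrr normr0 expr0n mul0r.
rewrite (_ : probeq P _ v = 0) ?mulr0 //.
rewrite /probeq (_ : [set _ | c = v] = set0) ?measure0 //.
by apply/seteqP; split => t // cv; rewrite cv eqxx in neq.
Qed.

Lemma probeq_divn (Z : T -> C) k v : (0 < k)%N ->
  probeq P (fun t => Z t / k%:R) (v / k%:R) = probeq P Z v.
Proof.
move=> k_gt0; have k_neq0 : (k%:R : C)^-1 != 0 by rewrite invr_eq0 pnatr_eq0 -lt0n.
rewrite /probeq; congr (fine (P _))%:C.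
by apply/seteqP; split => t /= => [/(mulIf k_neq0)|->].
Qed.

Lemma uniq_Xmvals k : (0 < k)%N -> uniq (Xmvals R k).
Proof.
move=> k_gt0; rewrite map_inj_uniq ?uniq_Xvals //.
by apply: mulIf; rewrite invr_eq0 pnatr_eq0 -lt0n.
Qed.

Lemma cexpect_divn (Z : T -> C) k : (0 < k)%N ->
  cexpect P (Xmvals R k) (fun t => Z t / k%:R) = cexpect P (Xvals R) Z / k%:R.
Proof.
move=> k_gt0; rewrite /cexpect !undup_id ?uniq_Xvals ?uniq_Xmvals // big_map mulr_suml.
by apply: eq_bigr => v _; rewrite probeq_divn // mulrAC.
Qed.

Lemma cvar_divn (Z : T -> C) k : (0 < k)%N ->
  cvar P (Xmvals R k) (fun t => Z t / k%:R) = cvar P (Xvals R) Z / k%:R ^+ 2.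
Proof.
move=> k_gt0; rewrite /cvar cexpect_divn // !undup_id ?uniq_Xvals ?uniq_Xmvals //.
rewrite big_map [RHS]mulr_suml; apply: eq_bigr => v _.
by rewrite probeq_divn // -mulrBl normrM normfV normr_nat exprMn exprVn mulrAC.
Qed.

End DiscreteVariables.

Lemma sum_cube_supported_le (F : numFieldType) (c : nat -> F) N :
  (forall k, 0 <= c k <= 1) -> (forall k, c k != 0 -> exists n, k = (n ^ 3)%N) ->
  \sum_(1 <= k < N.+1) c k / k%:R <= \sum_(1 <= n < N.+1) n%:R ^- 3.
Proof.
move=> c01 c_cube; set r := index_iota 1 N.+1.
have r_uniq : uniq r by rewrite iota_uniq.
have invX3_ge0 n : 0 <= n%:R ^- 3 :> F by rewrite invr_ge0 exprn_ge0.
(* The term of index [k = n ^ 3] is charged to the term [n%:R ^- 3]. *)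
apply: (@le_trans _ _
  (\sum_(k <- r) \sum_(n <- r) if k == (n ^ 3)%N then n%:R ^- 3 else 0)).
  apply: ler_sum_nat => k /andP[k_gt0 k_le].
  have [->|/c_cube[n k_cube]] := eqVneq (c k) 0.
    by rewrite mul0r sumr_ge0 // => n _; case: ifP.
  have n_gt0 : (0 < n)%N by move: k_gt0; rewrite k_cube expn_gt0 orbF.
  have nr : n \in r.
    rewrite mem_index_iota n_gt0 /= (leq_ltn_trans _ k_le) // k_cube.
    by rewrite -{1}[n]expn1 leq_pexp2l.
  rewrite (bigD1_seq n) //= -k_cube eqxx ler_wpDr ?sumr_ge0 //.
    by move=> m _; case: ifP.
  by rewrite k_cube natrX ler_piMl ?invX3_ge0 ?(andP (c01 _)).2.
rewrite exchange_big; apply: ler_sum => n _; rewrite -big_mkcond /=.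
have [n3r|n3Nr] := boolP ((n ^ 3)%N \in r); first by rewrite big_pred1_seq.
by rewrite big1_seq // => k /andP[/eqP ->]; rewrite (negPf n3Nr).
Qed.

Lemma sum_inv_sqr_le (R : realFieldType) N :
  \sum_(2 <= k < N.+2) (k%:R ^- 2 : R) <= 1 - N.+1%:R^-1.
Proof.
elim: N => [|N IHN]; first by rewrite big_geq // invr1 subrr.
rewrite big_nat_recr //=.
apply: le_trans (lerD IHN (_ : _ <= N.+1%:R^-1 - N.+2%:R^-1)) _.
  have x_ge1 : 1 <= N.+1%:R :> R by rewrite ler1n.
  rewrite -natr1; set x := N.+1%:R.
  have -> : x^-1 - (x + 1)^-1 = (x * (x + 1))^-1.
    by field; apply/andP; split; apply/negP => /eqP; lra.
  by rewrite lef_pV2 ?posrE; nra.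
by rewrite addrA subrK.
Qed.

Lemma sum_inv_sqr_le1 (R : realFieldType) N :
  \sum_(2 <= k < N) (k%:R ^- 2 : R) <= 1.
Proof.
case: N => [|[|N]]; try by rewrite big_geq ?ler01.
by apply: le_trans (sum_inv_sqr_le R N) _; rewrite gerBl invr_ge0.
Qed.

Lemma psum_le_zeta (R : realType) s N :
  (2 <= s)%N -> \sum_(1 <= n < N) (n%:R ^- s : R) <= zeta R s.
Proof.
move=> s_ge2; set u := fun N => \sum_(1 <= n < N) (n%:R ^- s : R).
have u_nd : {homo u : n m / (n <= m)%N >-> n <= m}.
  apply/nondecreasing_seqP => n; rewrite /u.
  case: n => [|n]; first by rewrite !big_geq.
  by rewrite [leRHS]big_nat_recr //= lerDl invr_ge0 exprn_ge0.
have u_le2 n : u n <= 2.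
  apply: (@le_trans _ _ (\sum_(1 <= k < n) (k%:R ^- 2 : R))).
    apply: ler_sum_nat => k /andP[k_gt0 _].
    have k_ge1 : 1 <= k%:R :> R by rewrite ler1n.
    rewrite lef_pV2 ?posrE ?exprn_gt0 ?(lt_le_trans ltr01) //.
    by rewrite -(subnKC s_ge2) exprD ler_peMr ?exprn_ge0 ?exprn_ege1.
  case: n => [|[|n]]; try by rewrite big_geq ?ler0n.
  rewrite big_ltn // expr1n invr1 -[2 : R]/(1 + 1) lerD2l.
  exact: sum_inv_sqr_le1.
have u_bnd : has_ubound (range u) by exists 2 => _ [n _ <-].
exact: (nondecreasing_cvgn_le u_nd (nondecreasing_is_cvgn u_nd u_bnd) N).
Qed.

Lemma one_le_zeta (R : realType) s : (2 <= s)%N -> 1 <= zeta R s.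
Proof.
move=> s_ge2; apply: le_trans (psum_le_zeta R 2 s_ge2).
by rewrite big_nat1 expr1n invr1.
Qed.

Lemma sum_invXn_complex (R : realType) m N s :
  \sum_(m <= n < N) (n%:R ^- s : R[i]) = (\sum_(m <= n < N) (n%:R ^- s : R))%:C.
Proof.
by rewrite rmorph_sum; apply: eq_bigr => n _; rewrite fmorphV rmorphXn rmorph_nat.
Qed.

Section IndependentPrimes.
Variables (R : realType) (d : measure_display) (T : measurableType d).
Variable P : probability T R.
Local Notation C := R[i].
Local Notation cprob := (cprob P).
Local Notation cexpect_on := (cexpect_on P).

Variable X : nat -> T -> C.
Hypothesis Xval : forall p t, prime p -> X p t \in Xvals R.
Hypothesis Xmeas : forall p v, prime p -> v \in Xvals R ->
  measurable [set t | X p t = v].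
Hypothesis Xlaw : forall p v, prime p -> v \in behead (Xvals R) ->
  P [set t | X p t = v] = ((1 - delta R p) / 3)%:E.
Hypothesis Xindep : forall (s : seq nat) (v : nat -> C),
  uniq s -> all prime s -> {in s, forall p, v p \in Xvals R} ->
  P (\bigcap_(p in [set p | p \in s]) [set t | X p t = v p]) =
  (\prod_(p <- s) P [set t | X p t = v p])%E.

Lemma discrete_X p : prime p -> discrete_rv (X p).
Proof.
move=> p_prime; split=> [t|v]; first exact: Xval.
have [vX|vNX] := boolP (v \in Xvals R); first exact: Xmeas.
rewrite (_ : [set t | _] = set0) //; apply/seteqP; split => t //= Xt.
by move: vNX; rewrite -Xt Xval.
Qed.

Definition Xevent (r : seq nat) (u : nat -> C) : set T :=
  \bigcap_(p in [set p | p \in r]) [set t | X p t = u p].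

Lemma measurable_Xevent r u : all prime r -> measurable (Xevent r u).
Proof.
move=> /allP r_prime; rewrite /Xevent bigcap_seq big_seq.
by apply: bigsetI_measurable => p /r_prime /discrete_X[].
Qed.

Lemma cprob_Xevent r u :
  uniq r -> all prime r -> {in r, forall p, u p \in Xvals R} ->
  cprob (Xevent r u) = \prod_(p <- r) cprob [set t | X p t = u p].
Proof.
move=> r_uniq r_prime uX; rewrite /cprob /Xevent Xindep // -rmorph_prod.
rewrite (eq_big_seq (fun p => (fine (P [set t | X p t = u p]))%:E)) ?prodEFin //.
move=> p /(allP r_prime) /discrete_X[_ Xpmeas].
by rewrite fineK // fin_num_measure.
Qed.

Lemma Xevent_cons p r u x : p \notin r ->
  [set t | X p t = x] `&` Xevent r u =
  Xevent (p :: r) (fun q => if q == p then x else u q).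
Proof.
move=> pNr; have neq_p q : q \in r -> (q == p) = false.
  by move=> qr; apply/eqP => qp; rewrite -qp qr in pNr.
apply/seteqP; split => t /=.
  move=> [Xpt Xrt] q /=; rewrite inE => /orP[/eqP ->|qr]; first by rewrite eqxx.
  by rewrite neq_p //; apply: Xrt.
move=> Xt; split; first by have := Xt p; rewrite /= inE eqxx => ->.
by move=> q /= qr; have := Xt q; rewrite /= inE qr orbT neq_p // => ->.
Qed.

Lemma Xevent_nil u : Xevent [::] u = setT.
Proof. by apply/seteqP; split => t // _ q. Qed.

Definition Xprod (a : nat -> nat) (s : seq nat) (t : T) : C :=
  \prod_(p <- s) X p t ^+ a p.

Lemma discrete_Xprod a s : all prime s -> discrete_rv (Xprod a s).
Proof.
elim: s => [_|p s IHs /andP[p_prime s_prime]].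
  rewrite /Xprod; under eq_fun do rewrite big_nil.
  exact/discrete_rv_const/Xvals1.
rewrite /Xprod; under eq_fun do rewrite big_cons.
apply: (discrete_rvM _ (IHs s_prime)).
apply: (discrete_rv_comp (f := fun x => x ^+ a p) _ (discrete_X p_prime)).
by move=> x; apply: XvalsX.
Qed.

Definition Xmoment (p a : nat) : C :=
  \sum_(x <- Xvals R) x ^+ a * cprob [set t | X p t = x].

(* Intersecting [Xevent r u] with [[X p = x]] yields another [Xevent], which
   keeps the induction on [s] inside this family of events. *)

Lemma cexpect_on_Xprod a s r u : uniq (s ++ r) -> all prime (s ++ r) ->
  {in r, forall p, u p \in Xvals R} ->
  cexpect_on (Xprod a s) (Xevent r u) =
  cprob (Xevent r u) * \prod_(p <- s) Xmoment p (a p).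
Proof.
elim: s r u => [|p s IHs] r u /=.
  move=> _ r_prime uX; rewrite big_nil mulr1 /Xprod.
  under eq_fun do rewrite big_nil.
  by rewrite cexpect_on_const ?mul1r ?Xvals1 //; apply: measurable_Xevent.
rewrite mem_cat negb_or all_cat => /andP[/andP[pNs pNr] sr_uniq].
move=> /and3P[p_prime s_prime r_prime] uX.
rewrite /Xprod; under eq_fun do rewrite big_cons.
rewrite (cexpect_on_mul P (g := fun x => x ^+ a p) _ (discrete_X p_prime)
  (discrete_Xprod a s_prime) (measurable_Xevent u r_prime)); last first.
  by move=> x; apply: XvalsX.
rewrite big_cons mulrCA [Xmoment p _]/Xmoment mulr_suml; apply: eq_big_seq => x xX.
have u'X : {in p :: r, forall q, (if q == p then x else u q) \in Xvals R}.
  by move=> q; rewrite inE; case: eqP => //= _; apply: uX.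
have r_uniq : uniq r by move: sr_uniq; rewrite cat_uniq => /and3P[].
have pr_uniq : uniq (p :: r) by rewrite /= pNr.
have spr_uniq : uniq (s ++ p :: r).
  by rewrite (uniq_catCA s [:: p] r) /= mem_cat negb_or pNs pNr.
have spr_prime : all prime (s ++ p :: r) by rewrite all_cat /= p_prime s_prime.
rewrite Xevent_cons // IHs // !cprob_Xevent //= ?p_prime // big_cons eqxx !mulrA.
congr (_ * _ * _); apply: eq_big_seq => q qr.
by case: eqP => // qp; rewrite -qp qr in pNr.
Qed.

Lemma cexpect_Xmul m :
  cexpect P (Xvals R) (Xmul X m) = \prod_(p <- primes m) Xmoment p (logn p m).
Proof.
have -> : Xmul X m = Xprod (logn^~ m) (primes m) by [].
rewrite cexpect_on_setT -(Xevent_nil (fun _ => 0)).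
rewrite cexpect_on_Xprod ?cats0 ?primes_uniq ?all_prime_primes //.
by rewrite Xevent_nil cprobT mul1r.
Qed.

Lemma Xmoment_pos p a : prime p -> (0 < a)%N ->
  Xmoment p a = if (3 %| a)%N then (1 - delta R p)%:C else 0.
Proof.
move=> p_prime a_gt0.
have cprobX v : v \in behead (Xvals R) ->
    cprob [set t | X p t = v] = ((1 - delta R p) / 3)%:C.
  by move=> vX; rewrite /cprob Xlaw.
rewrite /Xmoment /Xvals !big_cons big_nil expr0n (gtn_eqF a_gt0) mul0r add0r.
rewrite !cprobX ?inE ?eqxx ?orbT // addr0 expr1n -!mulrDl addrA omega3_power_sum.
case: ifP => _; last by rewrite mul0r.
by rewrite -[3 : C](rmorph_nat (real_complex R)) -rmorphM mulrC divfK.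
Qed.

Lemma cexpect_Xmul_cube m : perfect_cube m ->
  cexpect P (Xvals R) (Xmul X m) = (\prod_(p <- primes m) (1 - delta R p))%:C.
Proof.
move=> /allP m_cube; rewrite cexpect_Xmul rmorph_prod; apply: eq_big_seq => p pm.
have /and3P[p_prime _ _] : [&& prime p, 0 < m & p %| m]%N by rewrite -mem_primes.
by rewrite Xmoment_pos ?m_cube // logn_gt0.
Qed.

Lemma cexpect_Xmul_noncube m :
  ~~ perfect_cube m -> cexpect P (Xvals R) (Xmul X m) = 0.
Proof.
case/allPn => p pm p_exp; rewrite cexpect_Xmul (big_rem p pm) /=.
have /and3P[p_prime _ _] : [&& prime p, 0 < m & p %| m]%N by rewrite -mem_primes.
by rewrite Xmoment_pos ?logn_gt0 // (negPf p_exp) mul0r.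
Qed.

Lemma discrete_Xmul m : discrete_rv (Xmul X m).
Proof. exact: discrete_Xprod (all_prime_primes m). Qed.

Lemma cexpect_Xmul_ge0_le1 k : 0 <= cexpect P (Xvals R) (Xmul X k) <= 1.
Proof.
have [k_cube|k_noncube] := boolP (perfect_cube k); last first.
  by rewrite cexpect_Xmul_noncube ?lexx ?ler01.
rewrite cexpect_Xmul_cube // ler0c -[1 : C]/(1%:C) lecR.
rewrite prodr_ge0 ?prodr_ile1 // => p _; first exact: one_sub_delta_ge0_le1.
by case/andP: (one_sub_delta_ge0_le1 R p).
Qed.

Lemma sum_cexpect_Xmul_div_le N :
  \sum_(1 <= k < N.+1) cexpect P (Xmvals R k) (fun t => Xmul X k t / k%:R)
  <= (zeta R 3)%:C.
Proof.
under eq_big_nat => k /andP[k_gt0 _] do rewrite cexpect_divn //.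
apply: le_trans (sum_cube_supported_le N cexpect_Xmul_ge0_le1 _) _.
  move=> k E_neq0; apply/perfect_cubeP; apply: contraNT E_neq0.
  by move=> /cexpect_Xmul_noncube ->.
by rewrite sum_invXn_complex lecR psum_le_zeta.
Qed.

Lemma sum_cvar_Xmul_div_le N :
  \sum_(1 <= k < N.+1) cvar P (Xmvals R k) (fun t => Xmul X k t / k%:R)
  <= (zeta R 6)%:C.
Proof.
have Xmul1 : Xmul X 1 = fun _ => 1 by apply/funext => t; rewrite /Xmul big_nil.
case: N => [|N]; first by rewrite big_geq // ler0c (le_trans ler01) ?one_le_zeta.
rewrite big_ltn // cvar_divn // Xmul1 cvar_const ?Xvals1 // mul0r add0r.
apply: le_trans (_ : _ <= \sum_(2 <= k < N.+2) k%:R ^- 2) _.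
  apply: ler_sum_nat => k /andP[k_ge2 _].
  rewrite cvar_divn ?(ltnW k_ge2) // ler_piMl ?invr_ge0 ?exprn_ge0 ?ler0n //.
  exact/cvar_le1/discrete_Xmul.
rewrite sum_invXn_complex lecR; apply: le_trans (sum_inv_sqr_le1 _ _) _.
exact: one_le_zeta.
Qed.

End IndependentPrimes.

Theorem lemma4p2 (R : realType) (d : measure_display) (T : measurableType d)
  (P : probability T R) (X : nat -> T -> R[i])
  (* each X(p) takes values in {0, 1, w, w^2} *)
  (Xval : forall p t, prime p -> X p t \in Xvals R)
  (Xmeas : forall p v, prime p -> v \in Xvals R -> measurable [set t | X p t = v])
  (* law of X(p) *)
  (Xlaw0 : forall p, prime p -> P [set t | X p t = 0] = (delta R p)%:E)
  (Xlaw : forall p v, prime p -> v \in behead (Xvals R) ->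
            P [set t | X p t = v] = ((1 - delta R p) / 3)%:E)
  (* mutual independence of the X(p), p prime *)
  (Xindep : forall (s : seq nat) (v : nat -> R[i]),
     uniq s -> all prime s -> {in s, forall p, v p \in Xvals R} ->
     P (\bigcap_(p in [set p | p \in s]) [set t | X p t = v p]) =
     (\prod_(p <- s) P [set t | X p t = v p])%E)
  (m : nat) (m_gt0 : (0 < m)%N) :
  [/\ ((exists n : nat, m = (n ^ 3)%N) ->
          cexpect P (Xvals R) (Xmul X m) = (\prod_(p <- primes m) (1 - delta R p))%:C),
      (~ (exists n : nat, m = (n ^ 3)%N) -> cexpect P (Xvals R) (Xmul X m) = 0),
      (\prod_(p <- primes m) (1 - delta R p) =
        \prod_(p <- primes m | (p %% 3 == 1)%N) ((p%:R : R) / (p%:R + 2))),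
      (forall N : nat, \sum_(1 <= k < N.+1)
          cexpect P (Xmvals R k) (fun t => Xmul X k t / k%:R) <= (zeta R 3)%:C) &
      (forall N : nat, \sum_(1 <= k < N.+1)
          cvar P (Xmvals R k) (fun t => Xmul X k t / k%:R) <= (zeta R 6)%:C)].
Proof.
split.
- by move=> /perfect_cubeP; apply: cexpect_Xmul_cube.
- by move=> m_noncube; apply: cexpect_Xmul_noncube => //; apply/negP => /perfect_cubeP.
- by rewrite [RHS]big_mkcond; apply: eq_bigr => p _; rewrite one_sub_delta.
- exact: sum_cexpect_Xmul_div_le.
- exact: sum_cvar_Xmul_div_le.
Qed.
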